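(* Let $K$ be a Markov kernel from $(\mathbb{R}^d,\mathcal{B}(\mathbb{R}^d))$ to $(\mathbb{R}^{2d},\mathcal{B}(\mathbb{R}^{2d}))$, let $\alpha:\mathbb{R}^d\times\mathbb{R}^{2d}\to[0,1]$ be Borel measurable, and let $P$ be the Markov kernel on $\mathbb{R}^d$ given by $$P(q,A)=\int 1_A(\mathrm{proj}(z))\alpha(q,z)K(q,dz)+\delta_q(A)\int\{1-\alpha(q,z)\}K(q,dz).$$ Let $V:\mathbb{R}^d\to[1,\infty)$ be measurable, extended to $\mathbb{R}^{2d}$ by $V(q,p)=V(q)$, and for $q\in\mathbb{R}^d$ let $\mathscr R(q)=\{z\in\mathbb{R}^{2d}:\alpha(q,z)<1\}$ and $\mathscr B(q)=\{z\in\mathbb{R}^{2d}:V(\mathrm{proj}(z))\le V(q)\}$. Assume there exist $\lambda\in[0,1)$ and $b\ge0$ such that $KV\le\lambda V+b$ and $$\lim_{M\to\infty}\sup_{\{q:V(q)\ge M\}}K(q,\mathscr R(q)\cap\mathscr B(q))=0.$$ Then there exist $\tilde\lambda\in[0,1)$ and $\tilde b\ge0$ such that $PV\le\tilde\lambda V+\tilde b$.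
   Context: $\mathrm{proj}:\mathbb{R}^d\times\mathbb{R}^d\to\mathbb{R}^d$ is the projection onto the first $d$ coordinates. $KV(q)=\int V(z)K(q,dz)$. *)

From HB Require Import structures.
From mathcomp Require Import all_boot all_order all_algebra.
From mathcomp Require Import all_classical all_reals all_analysis.
Set Implicit Arguments. Unset Strict Implicit. Unset Printing Implicit Defensive.
Import Order.TTheory GRing.Theory Num.Theory.
Local Open Scope classical_set_scope.
Local Open Scope ring_scope.
Local Open Scope ereal_scope.

(* R^n is modelled as n.-tuple R with the product sigma-algebra of Borel sets
   (= Borel sigma-algebra of R^n); R^{2n} = R^n * R^n with the product
   sigma-algebra (= Borel sigma-algebra of R^{2n}); proj = fst. *)
Notation Rn R n := (n.-tuple (R : realType)).

Definition P_formula (R : realType) (n : nat)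
  (K : R.-pker Rn R n ~> (Rn R n * Rn R n)%type)
  (alpha : Rn R n -> (Rn R n * Rn R n)%type -> R)
  (q : Rn R n) (A : set (Rn R n)) : \bar R :=
  \int[K q]_z ((\1_A z.1 : R) * alpha q z)%:E
  + \d_q A * \int[K q]_z (1 - alpha q z)%:E.

Definition rej_set (R : realType) (n : nat)
  (alpha : Rn R n -> (Rn R n * Rn R n)%type -> R) (q : Rn R n)
  : set (Rn R n * Rn R n) := [set z | (alpha q z < 1)%R].

Definition below_set (R : realType) (n : nat) (V : Rn R n -> R) (q : Rn R n)
  : set (Rn R n * Rn R n) := [set z | (V z.1 <= V q)%R].

From HB Require Import structures.
From mathcomp Require Import all_boot all_order all_algebra.
From mathcomp Require Import all_classical all_reals all_analysis.
From mathcomp Require Import measurable_realfun lra.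
Set Implicit Arguments. Unset Strict Implicit. Unset Printing Implicit Defensive.
Import Order.TTheory GRing.Theory Num.Theory.
Local Open Scope classical_set_scope.
Local Open Scope ring_scope.

(* P is the composition of K with the accept/reject kernel
   (q, z) |-> alpha(q,z) delta_(proj z) + (1 - alpha(q,z)) delta_q, hence
   PV(q) = \int (alpha(q,z) V(proj z) + (1 - alpha(q,z)) V(q)) K(q,dz).
   The integrand is at most V(proj z), plus V(q) when z is in R(q) and B(q),
   so PV <= KV + V K(q, R(q) `&` B(q)) <= lam V + b + V K(q, R(q) `&` B(q)).
   Taking M such that K(q, R(q) `&` B(q)) <= (1 - lam)/2 as soon as V(q) >= M
   gives the drift constants lam + (1 - lam)/2 and b + M. *)

Lemma mix_le_add_indic (R : realDomainType) (a u v : R) :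
  0 <= a <= 1 -> 0 <= u -> 0 <= v ->
  a * u + (1 - a) * v <= u + v * ((a < 1) && (u <= v))%:R.
Proof.
move=> /andP[a0 a1] u0 v0.
by have [a_1|a_1] := ltP a 1; have [uv|uv] := leP u v;
  rewrite /= ?mulr1 ?mulr0 ?addr0; nra.
Qed.

Lemma le_drift_split (R : realDomainType) (lam b eps M v s : R) :
  0 <= eps -> 0 <= M -> 0 <= s <= 1 -> 0 <= v -> (M <= v -> s <= eps) ->
  lam * v + b + v * s <= (lam + eps) * v + (b + M).
Proof.
move=> eps0 M0 /andP[s0 s1] v0 small.
by have [/small seps|vM] := leP M v; nra.
Qed.

Local Open Scope ereal_scope.

Lemma tail_le_of_sup_cvg0 (T : Type) (R : realType) (f : T -> \bar R)
    (V : T -> R) :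
  (fun M : R => ereal_sup ([set f q | q in [set q | (M <= V q)%R]] `|` [set 0]))
    @ +oo%R --> 0 ->
  forall eps : R, (0 < eps)%R ->
  exists2 M : R, (0 <= M)%R & forall q, (M <= V q)%R -> f q <= eps%:E.
Proof.
move=> sup_cvg0 eps eps0.
have near0 : nbhs (0 : \bar R) [set y | y < eps%:E].
  apply/nbhs_EFin; near=> x; rewrite /= lte_fin; near: x.
  exact: num_topology.nbhs0_lt.
have [M0 [_ M0_small]] := sup_cvg0 _ near0.
exists (Num.max (M0 + 1) 0)%R; first by rewrite le_max lexx orbT.
move=> q Vq; apply/ltW/(le_lt_trans _ (M0_small (Num.max (M0 + 1) 0)%R _)).
  by apply: ereal_sup_ubound; left; exists q.
by rewrite lt_max ltrDl ltr01.
Unshelve. all: by end_near.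
Qed.

Section accept_reject.
Context d d' (X : measurableType d) (Y : measurableType d') (R : realType).
Variables (pr : Y -> X) (alpha : X -> Y -> R).
Hypothesis mpr : measurable_fun [set: Y] pr.
Hypothesis malpha : measurable_fun [set: X * Y] (fun w => alpha w.1 w.2).
Hypothesis alpha01 : forall q z, (0 <= alpha q z <= 1)%R.

Let alpha_ge0 q z : (0 <= alpha q z)%R.
Proof. by case/andP: (alpha01 q z). Qed.

Let alphaC_ge0 q z : (0 <= 1 - alpha q z)%R.
Proof. by case/andP: (alpha01 q z); rewrite subr_ge0. Qed.

Definition accept_reject (w : X * Y) : {measure set X -> \bar R} :=
  measure_add (mscale (NngNum (alpha_ge0 w.1 w.2)) \d_(pr w.2))
              (mscale (NngNum (alphaC_ge0 w.1 w.2)) \d_w.1).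

Lemma accept_rejectE w U : accept_reject w U =
  (alpha w.1 w.2 * \1_U (pr w.2) + (1 - alpha w.1 w.2) * \1_U w.1)%:E.
Proof. by rewrite [LHS]measure_addE EFinD !EFinM. Qed.

Lemma measurable_alpha q : measurable_fun [set: Y] (alpha q).
Proof. exact: measurableT_comp malpha (pair1_measurable q). Qed.

Lemma measurable_accept_reject U : measurable U ->
  measurable_fun [set: X * Y] (accept_reject ^~ U).
Proof.
move=> mU; under eq_fun do rewrite accept_rejectE.
apply/measurable_EFinP; apply: measurable_funD; apply: measurable_funM => //.
- exact/measurableT_comp/measurableT_comp.
- exact: measurable_funB.
- exact: measurableT_comp.
Qed.

HB.instance Definition _ :=
  isKernel.Build _ _ _ _ R accept_reject measurable_accept_reject.

Lemma accept_reject_setT w : accept_reject w [set: X] = 1.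
Proof. by rewrite accept_rejectE !indicE !in_setT /= !mulr1 addrC subrK. Qed.

HB.instance Definition _ :=
  Kernel_isProbability.Build _ _ _ _ _ accept_reject accept_reject_setT.

Lemma kcomp_accept_rejectE (K : X -> {measure set Y -> \bar R}) q A :
  measurable A -> kcomp K accept_reject q A =
  \int[K q]_z ((\1_A (pr z) : R) * alpha q z)%:E
  + \d_q A * \int[K q]_z (1 - alpha q z)%:E.
Proof.
move=> mA; rewrite /kcomp.
under eq_integral => z _ do rewrite accept_rejectE /= EFinD.
rewrite ge0_integralD //; last 4 first.
- by move=> z _; rewrite lee_fin mulr_ge0.
- apply/measurable_EFinP/measurable_funM; first exact: measurable_alpha.
  exact: measurableT_comp.
- by move=> z _; rewrite lee_fin mulr_ge0.
- apply/measurable_EFinP/measurable_funM => //.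
  exact/measurable_funB/measurable_alpha.
congr (_ + _); first by apply: eq_integral => z _; rewrite mulrC.
under eq_integral do rewrite EFinM.
rewrite ge0_integralZr 1?muleC //.
- exact/measurable_EFinP/measurable_funB/measurable_alpha.
- by move=> z _; rewrite lee_fin.
Qed.

Section integral.
Variables (f : X -> R).
Hypothesis f_ge0 : forall x, (0 <= f x)%R.
Hypothesis mf : measurable_fun [set: X] f.

Let mfE : measurable_fun [set: X] (EFin \o f).
Proof. exact/measurable_EFinP. Qed.

Let fE_ge0 x : 0 <= (f x)%:E.
Proof. by rewrite lee_fin. Qed.

Lemma integral_kcomp_accept_reject (K : R.-sfker X ~> Y) q :
  \int[kcomp K accept_reject q]_x (f x)%:E =
  \int[K q]_z (alpha q z * f (pr z) + (1 - alpha q z) * f q)%:E.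
Proof.
rewrite integral_kcomp //; apply: eq_integral => z _.
rewrite ge0_integral_measure_add // !ge0_integral_mscale // !integral_dirac //.
by rewrite !diracT !mul1e /= -!EFinM -EFinD.
Qed.

Lemma measurable_rejected_below q :
  measurable ([set z | alpha q z < 1] `&` [set z | f (pr z) <= f q])%R.
Proof.
apply: measurableI.
  rewrite -[X in measurable X]setTI.
  by apply: measurable_fun_ltr => //; exact: measurable_alpha.
rewrite -[X in measurable X]setTI.
by apply: measurable_fun_ler => //; exact: measurableT_comp.
Qed.

Lemma integral_accept_reject_le (K : X -> {measure set Y -> \bar R}) q :
  \int[K q]_z (alpha q z * f (pr z) + (1 - alpha q z) * f q)%:E <=
  \int[K q]_z (f (pr z))%:E
  + (f q)%:E * K q ([set z | alpha q z < 1] `&` [set z | f (pr z) <= f q])%R.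
Proof.
set S := (X in K q X); have mS : measurable S := measurable_rejected_below q.
have mfpr : measurable_fun [set: Y] (f \o pr) by exact: measurableT_comp.
have mindicS : measurable_fun [set: Y] (\1_S : Y -> R).
  exact: measurable_indic.
apply: (@le_trans _ _ (\int[K q]_z (f (pr z) + f q * \1_S z)%:E)).
  apply: ge0_le_integral => //.
  - by move=> z _; rewrite lee_fin addr_ge0 ?mulr_ge0.
  - apply/measurable_EFinP/measurable_funD; apply: measurable_funM => //.
      exact: measurable_alpha.
    exact/measurable_funB/measurable_alpha.
  - exact/measurable_EFinP/measurable_funD/measurable_funM.
  move=> z _; rewrite lee_fin indicE.
  have -> : (z \in S) = (alpha q z < 1)%R && (f (pr z) <= f q)%R.
    by apply/idP/andP => [/set_mem[]|?]; [split|exact: mem_set].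
  exact: mix_le_add_indic.
under eq_integral do rewrite EFinD EFinM.
rewrite ge0_integralD //.
- by rewrite ge0_integralZl ?integral_indic ?setIT //; exact/measurable_EFinP.
- exact/measurable_EFinP.
- by move=> z _; rewrite mule_ge0 ?lee_fin.
- exact/measurable_funeM/measurable_EFinP.
Qed.

End integral.
End accept_reject.

Lemma pker_EFin d d' (X : measurableType d) (Y : measurableType d')
  (R : realType) (K : R.-pker X ~> Y) x A : measurable A ->
  exists2 s : R, (0 <= s <= 1)%R & K x A = s%:E.
Proof.
move=> mA; have KA_le1 : K x A <= 1.
  by rewrite -(@prob_kernel _ _ _ _ _ K x); apply: le_measure; rewrite ?inE.
have KA_fin : K x A \is a fin_num.
  by rewrite ge0_fin_numE // (le_lt_trans KA_le1) ?ltey.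
exists (fine (K x A)); last by rewrite fineK.
by apply/andP; split; rewrite -lee_fin fineK.
Qed.

Theorem proposition5 (R : realType) (n : nat)
  (K : R.-pker Rn R n ~> (Rn R n * Rn R n)%type)
  (alpha : Rn R n -> (Rn R n * Rn R n)%type -> R)
  (P : Rn R n -> {measure set (Rn R n) -> \bar R})
  (V : Rn R n -> R) (lam b : R) :
  measurable_fun [set: (Rn R n * (Rn R n * Rn R n))%type]
    (fun w => alpha w.1 w.2) ->
  (forall q z, (0 <= alpha q z <= 1)%R) ->
  (forall q A, measurable A -> P q A = P_formula K alpha q A) ->
  measurable_fun [set: Rn R n] V ->
  (forall q, (1 <= V q)%R) ->
  (0 <= lam < 1)%R -> (0 <= b)%R ->
  (forall q, \int[K q]_z (V z.1)%:E <= (lam * V q + b)%:E) ->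
  (fun M : R => ereal_sup
     ([set K q (rej_set alpha q `&` below_set V q) | q in [set q | (M <= V q)%R]]
      `|` [set 0])) @ +oo%R --> 0 ->
  exists lam' b' : R, (0 <= lam' < 1)%R /\ (0 <= b')%R /\
    forall q, \int[P q]_x (V x)%:E <= (lam' * V q + b')%:E.
Proof.
move=> malpha alpha01 P_kernel mV V_ge1 /andP[lam_ge0 lam_lt1] b_ge0.
move=> KV_drift KS_cvg0.
have V_ge0 x : (0 <= V x)%R by apply: le_trans (V_ge1 x).
have eps_gt0 : (0 < (1 - lam) / 2)%R by rewrite divr_gt0 // subr_gt0.
have [M M_ge0 KS_small] := tail_le_of_sup_cvg0 KS_cvg0 eps_gt0.
exists (lam + (1 - lam) / 2)%R, (b + M)%R; split; last split.
- by apply/andP; split; lra.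
- exact: addr_ge0.
move=> q.
have [s s01 KSE] :=
  pker_EFin K q (measurable_rejected_below measurable_fst malpha mV q).
have PV_kcomp : \int[P q]_x (V x)%:E =
    \int[kcomp K (accept_reject fst alpha01) q]_x (V x)%:E.
  apply: eq_measure_integral => A mA _; rewrite P_kernel //.
  exact/esym/(kcomp_accept_rejectE measurable_fst malpha).
rewrite PV_kcomp (integral_kcomp_accept_reject measurable_fst malpha) //.
apply: le_trans
  (integral_accept_reject_le measurable_fst malpha alpha01 V_ge0 mV K q) _.
rewrite KSE -EFinM; apply: le_trans (leeD2r _ (KV_drift q)) _.
rewrite -EFinD lee_fin; apply: le_drift_split => //; first exact: ltW.
by move=> /KS_small; rewrite KSE lee_fin.
Qed.
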